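(* Let $G$ be a $K_3$-free graph and let $P,Q$ be two distinct bicliques of $G$ with $P\cap Q\neq\emptyset$. Then either $P$ and $Q$ are mutually included, or there is a biclique $R$ of $G$ that is mutually included with $P$ and mutually included with $Q$.
   Context: All graphs are finite and simple. A biclique of a graph $G$ is a set $P\subseteq V(G)$ such that the induced subgraph $G[P]$ is a complete bipartite graph with both parts nonempty, and $P$ is inclusion-maximal with this property. Since $G[P]$ is connected, its bipartition into two nonempty independent sets $X,Y$ (every vertex of $X$ adjacent to every vertex of $Y$) is unique; we write $P=XY$ to mean $P=X\cup Y$ with $X,Y$ these two parts, called the sides of $P$. Two bicliques $P,Q$ of $G$ are mutually included if their sides can be named $P=X_PY_P$, $Q=X_QY_Q$ so that $X_Q\subsetneq X_P$ and $Y_P\subsetneq Y_Q$. *)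

From mathcomp Require Import all_boot.
Set Implicit Arguments. Unset Strict Implicit. Unset Printing Implicit Defensive.

Definition simple_graph (T : finType) (e : rel T) : Prop :=
  symmetric e /\ irreflexive e.

Definition K3_free (T : finType) (e : rel T) : Prop :=
  forall x y z : T, ~ [&& e x y, e y z & e x z].

Definition independent (T : finType) (e : rel T) (X : {set T}) : Prop :=
  forall x y, x \in X -> y \in X -> ~~ e x y.

(* G[X :|: Y] is complete bipartite with nonempty parts X, Y
   (X, Y independent, every vertex of X adjacent to every vertex of Y;
   disjointness follows from irreflexivity). *)
Definition complete_bip (T : finType) (e : rel T) (X Y : {set T}) : Prop :=
  X != set0 /\ Y != set0 /\ independent e X /\ independent e Y /\
  (forall x y, x \in X -> y \in Y -> e x y).

Definition induces_cb (T : finType) (e : rel T) (P : {set T}) : Prop :=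
  exists X Y : {set T}, P = X :|: Y /\ complete_bip e X Y.

Definition biclique (T : finType) (e : rel T) (P : {set T}) : Prop :=
  induces_cb e P /\
  (forall P' : {set T}, P \subset P' -> induces_cb e P' -> P' = P).

Definition mutually_included (T : finType) (e : rel T) (P Q : {set T}) : Prop :=
  exists XP YP XQ YQ : {set T},
    [/\ P = XP :|: YP, complete_bip e XP YP,
        Q = XQ :|: YQ, complete_bip e XQ YQ &
        XQ \proper XP /\ YP \proper YQ].

From mathcomp Require Import all_boot.
From mathcomp Require Import boolp.

Set Implicit Arguments.
Unset Strict Implicit.

(* Let v be a common vertex of the distinct bicliques P and Q.  Name the sides
   so that v lies in X_P and in X_Q.  Then A := X_P ∩ X_Q and B := Y_P ∪ Y_Q
   induce a complete bipartite graph: every vertex of A sees all of B, and B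
   is independent because all its vertices are neighbours of v (K3-freeness).
   Extending A ∪ B to a biclique R, a maximality ("absorption") argument shows
   that the side of R containing A is exactly A, while the other side contains
   B.  If X_P ⊆ X_Q then R = P, which forces Y_Q ⊆ Y_P, and P, Q are mutually
   included; symmetrically if X_Q ⊆ X_P.  Otherwise R is mutually included
   with both P and Q. *)

Section Bicliques.
Variables (T : finType) (e : rel T).
Hypotheses (e_sym : symmetric e) (e_irr : irreflexive e).

Lemma complete_bip_sym X Y : complete_bip e X Y -> complete_bip e Y X.
Proof.
move=> [X0 [Y0 [iX [iY XY]]]]; do 4 (split => //).
by move=> y x yY xX; rewrite e_sym; apply: XY.
Qed.

Lemma mutually_included_sym P Q : mutually_included e P Q -> mutually_included e Q P.
Proof.
move=> [XP [YP [XQ [YQ [hP cP hQ cQ [XQP YPQ]]]]]].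
by exists YQ, XQ, YP, XP; split; rewrite 1?setUC //; apply: complete_bip_sym.
Qed.

Lemma oriented_sides P v : induces_cb e P -> v \in P ->
  exists X Y : {set T}, [/\ P = X :|: Y, complete_bip e X Y & v \in X].
Proof.
move=> [X [Y [-> cXY]]]; rewrite in_setU => /orP [vX | vY].
  by exists X, Y.
by exists Y, X; rewrite setUC; split => //; apply: complete_bip_sym.
Qed.

Lemma side_subset X Y X' Y' :
  complete_bip e X Y -> complete_bip e X' Y' -> X :|: Y = X' :|: Y' ->
  Y \subset Y' -> X \subset X'.
Proof.
move=> [_ [/set0Pn [y0 y0Y] [_ [_ XY]]]] [_ [_ [_ [iY' _]]]] hU YY'.
apply/subsetP => x xX; have : x \in X' :|: Y' by rewrite -hU in_setU xX.
rewrite in_setU => /orP [// | xY'].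
by have := iY' _ _ xY' (subsetP YY' _ y0Y); rewrite XY.
Qed.

Lemma side_placement X Y A B a0 b0 : complete_bip e X Y ->
  A :|: B \subset X :|: Y -> a0 \in A -> a0 \in X -> b0 \in B ->
  (forall a b, a \in A -> b \in B -> e a b) -> A \subset X /\ B \subset Y.
Proof.
move=> [_ [_ [iX [iY _]]]] /subUsetP [AXY BXY] a0A a0X b0B AB.
have BY : B \subset Y.
  apply/subsetP => b bB; have := subsetP BXY _ bB; rewrite in_setU => /orP [bX | //].
  by have := iX _ _ a0X bX; rewrite AB.
split => //; apply/subsetP => a aA.
have := subsetP AXY _ aA; rewrite in_setU => /orP [// | aY].
by have := iY _ _ aY (subsetP BY _ b0B); rewrite AB.
Qed.

(* Every set inducing a complete bipartite graph lies in some biclique: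
   bicliques are the maximal sets of this kind in a finite lattice. *)
Lemma biclique_extends S : induces_cb e S -> exists2 R, biclique e R & S \subset R.
Proof.
move=> cS; have [R /maxsetP [/asboolP cR maxR] SR] :=
  maxset_exists (P := fun S => `[< induces_cb e S >]) (asboolT cS).
by exists R => //; split => // R' RR' cR'; apply: maxR => //; apply/asboolP.
Qed.

(* Criterion for mutual inclusion: for distinct bicliques, weak nesting of
   the sides is automatically strict, by maximality. *)
Lemma mutually_included_of_nested P XP YP Q XQ YQ :
  biclique e P -> biclique e Q -> P = XP :|: YP -> complete_bip e XP YP ->
  Q = XQ :|: YQ -> complete_bip e XQ YQ -> P <> Q ->
  XQ \subset XP -> YP \subset YQ -> mutually_included e P Q.
Proof.
move=> [cP maxP] [cQ maxQ] hP cXYP hQ cXYQ PQ XQP YPQ.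
exists XP, YP, XQ, YQ; split => //; split;
  rewrite properEneq ?XQP ?YPQ andbT; apply/eqP => eqS; apply: PQ.
- by symmetry; apply: (maxP _ _ cQ); rewrite hP hQ eqS setUS.
- by apply: (maxQ _ _ cP); rewrite hP hQ eqS setSU.
Qed.

Hypothesis k3 : K3_free e.

Lemma independent_common_nbr (S : {set T}) y :
  (forall s, s \in S -> e s y) -> independent e S.
Proof. by move=> Sy s t sS tS; apply/negP => st; have := @k3 s t y; rewrite st !Sy. Qed.

(* Absorption: a vertex adjacent to a whole side Y of a biclique X ∪ Y
   belongs to the other side X, otherwise it would enlarge the biclique. *)
Lemma absorb P X Y x : biclique e P -> P = X :|: Y -> complete_bip e X Y ->
  (forall y, y \in Y -> e x y) -> x \in X.
Proof.
move=> [_ maxP] hP [_ [/set0Pn [y0 y0Y] [_ [iY XY]]]] xY.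
have cxXY : complete_bip e (x |: X) Y.
  have xXY s y : s \in x |: X -> y \in Y -> e s y.
    by rewrite in_setU1 => /orP [/eqP -> | sX] yY; [apply: xY | apply: XY].
  split; first by apply/set0Pn; exists x; rewrite setU11.
  split; first by apply/set0Pn; exists y0.
  by split; [apply: (@independent_common_nbr _ y0) => s sxX; apply: xXY | split].
have PxXY : P \subset (x |: X) :|: Y by rewrite hP setSU // subsetU1.
have cxP : induces_cb e ((x |: X) :|: Y) by exists (x |: X), Y.
have : x \in P by rewrite -(maxP _ PxXY cxP) in_setU setU11.
by rewrite hP in_setU => /orP [// | xY']; have := xY _ xY'; rewrite e_irr.
Qed.

Lemma common_refinement P XP YP Q XQ YQ v :
  biclique e P -> biclique e Q -> P = XP :|: YP -> complete_bip e XP YP ->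
  Q = XQ :|: YQ -> complete_bip e XQ YQ -> v \in XP -> v \in XQ ->
  exists R YR : {set T}, [/\ biclique e R, R = (XP :&: XQ) :|: YR,
    complete_bip e (XP :&: XQ) YR & YP :|: YQ \subset YR].
Proof.
move=> bP bQ hP cP hQ cQ vXP vXQ.
set A := XP :&: XQ; set B := YP :|: YQ.
have vA : v \in A by rewrite in_setI vXP vXQ.
have [_ [/set0Pn [y0 y0YP] [iXP [_ XYP]]]] := cP.
have [_ [_ [_ [_ XYQ]]]] := cQ.
have y0B : y0 \in B by rewrite in_setU y0YP.
have AB a b : a \in A -> b \in B -> e a b.
  by rewrite in_setI in_setU => /andP [aXP aXQ] /orP [bYP | bYQ]; [apply: XYP | apply: XYQ].
have cAB : complete_bip e A B.
  split; first by apply/set0Pn; exists v.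
  split; first by apply/set0Pn; exists y0.
  split; first by move=> a a' /setIP [aXP _] /setIP [a'XP _]; apply: iXP.
  by split => //; apply: (@independent_common_nbr _ v) => b bB; rewrite e_sym AB.
have [R bR ABR] := biclique_extends (ex_intro _ A (ex_intro _ B (conj erefl cAB))).
have vR : v \in R by apply: (subsetP ABR); rewrite in_setU vA.
have [XR [YR [hR cR vXR]]] := oriented_sides (proj1 bR) vR.
have ABXY : A :|: B \subset XR :|: YR by rewrite -hR.
have [AXR BYR] := side_placement cR ABXY vA vXR y0B AB.
have XRA : XR \subset A.
  have [_ [_ [_ [_ XYR]]]] := cR.
  apply/subsetP => x xXR; rewrite in_setI.
  by apply/andP; split; [apply: (absorb bP hP cP) | apply: (absorb bQ hQ cQ)] => y yY;
    apply: XYR => //; apply: (subsetP BYR); rewrite in_setU yY ?orbT.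
have XR_A : XR = A by apply/eqP; rewrite eqEsubset XRA.
by exists R, YR; rewrite -XR_A.
Qed.

Section Refinement.
Variables P XP YP Q XQ YQ R YR : {set T}.
Hypotheses (bP : biclique e P) (bQ : biclique e Q) (bR : biclique e R).
Hypotheses (hP : P = XP :|: YP) (cP : complete_bip e XP YP).
Hypotheses (hQ : Q = XQ :|: YQ) (cQ : complete_bip e XQ YQ).
Hypotheses (hR : R = (XP :&: XQ) :|: YR) (cR : complete_bip e (XP :&: XQ) YR).
Hypothesis YPQ_YR : YP :|: YQ \subset YR.

(* If X_P ⊆ X_Q the refinement is P itself, hence Y_Q ⊆ Y_P: P and Q are
   mutually included (with the sides X and Y exchanged). *)
Lemma refinement_nested : XP \subset XQ -> P <> Q -> mutually_included e P Q.
Proof.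
move=> XPQ PQ; have XR_XP : XP :&: XQ = XP by apply/setIidPl.
have hR_P : R = XP :|: YR by rewrite hR XR_XP.
have cR_P : complete_bip e XP YR by rewrite -XR_XP.
have YP_YR : YP \subset YR := subset_trans (subsetUl YP YQ) YPQ_YR.
have RP : R = P by apply: (proj2 bP _ _ (proj1 bR)); rewrite hP hR_P setUS.
have YR_YP : YR \subset YP.
  by apply: (side_subset (complete_bip_sym cR_P) (complete_bip_sym cP));
    rewrite // setUC -hR_P RP hP setUC.
have YQ_YP : YQ \subset YP := subset_trans (subset_trans (subsetUr YP YQ) YPQ_YR) YR_YP.
apply: (mutually_included_of_nested bP bQ _ (complete_bip_sym cP) _
  (complete_bip_sym cQ)) => //; by rewrite setUC.
Qed.

(* If X_P ⊄ X_Q the refinement differs from P, and it is mutually included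
   with P (its X-side shrinks, its Y-side grows). *)
Lemma refinement_below : ~~ (XP \subset XQ) -> mutually_included e R P.
Proof.
move=> XPQ; have YP_YR : YP \subset YR := subset_trans (subsetUl YP YQ) YPQ_YR.
have RP : R <> P.
  move=> RP; apply: (negP XPQ); apply: subset_trans (subsetIr XP XQ).
  by apply: (side_subset cP cR) => //; rewrite -hP -hR RP.
apply: (mutually_included_of_nested bR bP _ (complete_bip_sym cR) _
  (complete_bip_sym cP) RP) => //;
  [by rewrite hR setUC | by rewrite hP setUC | exact: subsetIl].
Qed.

End Refinement.

End Bicliques.

Theorem corollary1 (T : finType) (e : rel T) (P Q : {set T}) :
  simple_graph e -> K3_free e ->
  biclique e P -> biclique e Q -> P != Q -> P :&: Q != set0 ->
  mutually_included e P Q \/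
  exists R : {set T}, [/\ biclique e R, mutually_included e R P & mutually_included e R Q].
Proof.
move=> [e_sym e_irr] k3 bP bQ /eqP PQ /set0Pn [v /setIP [vP vQ]].
have [XP [YP [hP cP vXP]]] := oriented_sides e_sym (proj1 bP) vP.
have [XQ [YQ [hQ cQ vXQ]]] := oriented_sides e_sym (proj1 bQ) vQ.
have [R [YR [bR hR cR YPQ_YR]]] :=
  common_refinement e_sym e_irr k3 bP bQ hP cP hQ cQ vXP vXQ.
have hR' : R = (XQ :&: XP) :|: YR by rewrite setIC.
have cR' : complete_bip e (XQ :&: XP) YR by rewrite setIC.
have YQP_YR : YQ :|: YP \subset YR by rewrite setUC.
have [XPQ | nXPQ] := boolP (XP \subset XQ).
  by left; apply: (refinement_nested e_sym bP bQ bR hP cP hQ cQ hR cR YPQ_YR XPQ).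
have [XQP | nXQP] := boolP (XQ \subset XP).
  left; apply: (mutually_included_sym e_sym).
  apply: (refinement_nested e_sym bQ bP bR hQ cQ hP cP hR' cR' YQP_YR XQP).
  by move=> QP; apply: PQ.
right; exists R; split => //.
- exact: (refinement_below e_sym bP bR hP cP hR cR YPQ_YR nXPQ).
- exact: (refinement_below e_sym bQ bR hQ cQ hR' cR' YQP_YR nXQP).
Qed.
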